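(* Let $X$ and $Y$ be topological spaces. If $C(X)$ has the countable sup property and $Y$ has calibre $\aleph_1$, then $C(X\times Y)$ has the countable sup property.
   Context: $C(Z)$ is the vector lattice of real-valued continuous functions on $Z$ with the pointwise order; $X\times Y$ has the product topology. A vector lattice has the countable sup property if every nonempty subset possessing a supremum contains a countable subset with the same supremum. $Y$ has calibre $\aleph_1$ if every uncountable family of nonempty open subsets of $Y$ contains an uncountable subfamily with nonempty intersection. *)

From HB Require Import structures.
From mathcomp Require Import all_boot all_order all_algebra.
From mathcomp Require Import all_classical all_reals topology normedtype.
Set Implicit Arguments. Unset Strict Implicit. Unset Printing Implicit Defensive.
Import Order.TTheory GRing.Theory Num.Theory.
Import numFieldNormedType.Exports.
Local Open Scope classical_set_scope.
Local Open Scope ring_scope.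

Definition Cfun {R : realType} {Z : topologicalType} : set (Z -> R) :=
  [set f | continuous f].

Definition is_sup_C (R : realType) (Z : topologicalType)
    (A : set (Z -> R)) (s : Z -> R) : Prop :=
  Cfun s /\
  (forall f, A f -> forall z, f z <= s z) /\
  (forall u, Cfun u -> (forall f, A f -> forall z, f z <= u z) ->
     forall z, s z <= u z).

Definition countable_sup_property (R : realType) (Z : topologicalType) : Prop :=
  forall (A : set (Z -> R)) (s : Z -> R),
    A `<=` @Cfun R Z -> A !=set0 -> is_sup_C A s ->
    exists B : set (Z -> R), [/\ B `<=` A, countable B & is_sup_C B s].

Definition calibre_aleph1 (Y : topologicalType) : Prop :=
  forall F : set (set Y),
    ~ countable F -> (forall U, F U -> open U /\ U !=set0) ->
    exists G : set (set Y),
      [/\ G `<=` F, ~ countable G & \bigcap_(U in G) U !=set0].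

From mathcomp Require Import all_boot all_order all_algebra.
From mathcomp Require Import all_classical all_reals topology normedtype.
From mathcomp Require Import lra.
Set Implicit Arguments. Unset Strict Implicit. Unset Printing Implicit Defensive.
Import Order.TTheory GRing.Theory Num.Theory.
Import numFieldNormedType.Exports.
Local Open Scope classical_set_scope.
Local Open Scope ring_scope.

(** Both hypotheses and the conclusion are governed by the
countable chain condition of C(Z): every family of pairwise disjoint positive
elements of C(Z) is countable.  This condition is equivalent to the countable
sup property.  If an uncountable disjoint family E exists, the truncations
min((n+1)e, 1) of E, together with everything disjoint from E, have supremum
1, but only countably many members of E contribute to a countable subfamily,
whose supremum then misses the cozero set of another member.  Conversely, to
reach a supremum s, choose by Zorn for each n a maximal disjoint family of
positive d on whose cozero set some member of A is 1/(n+1)-close to s; the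
chosen members form a countable subfamily with supremum s.  Finally, the chain
condition passes from X to X * Y when Y has calibre aleph_1: uncountably many
of the projections to Y of the cozero sets of an uncountable disjoint family
on X * Y share a point y, and the slices at y of these members form an
uncountable disjoint family on X. *)

Lemma inj_countable T U (A : set T) (B : set U) (f : T -> U) :
  {in A &, injective f} -> f @` A `<=` B -> countable B -> countable A.
Proof.
move=> f_inj fAB cB; rewrite -(eq_countable (inj_card_eq f_inj)).
exact: sub_countable (subset_card_le fAB) cB.
Qed.

Section pointwise_continuity.
Context {R : realType} {Z : topologicalType}.
Implicit Types (e f g : Z -> R).

Lemma continuousB_fun f g :
  continuous f -> continuous g -> continuous (fun z => f z - g z).
Proof. by move=> cf cg z; exact: (@continuousB R R^o Z f g z (cf z) (cg z)). Qed.

Lemma continuous_min_fun f g :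
  continuous f -> continuous g -> continuous (fun z => Num.min (f z) (g z)).
Proof. by move=> cf cg z; exact: (@continuous_min R Z f g z (cf z) (cg z)). Qed.

Lemma continuous_max_fun f g :
  continuous f -> continuous g -> continuous (fun z => Num.max (f z) (g z)).
Proof. by move=> cf cg z; exact: (@continuous_max R Z f g z (cf z) (cg z)). Qed.

Lemma continuous_cst_fun (c : R) : continuous (fun _ : Z => c).
Proof. by move=> z; apply: cst_continuous. Qed.

Lemma continuousMn_fun f n : continuous f -> continuous (fun z => f z *+ n).
Proof.
move=> cf; elim: n => [|n IHn].
  by under eq_fun do rewrite mulr0n; exact: continuous_cst_fun.
under eq_fun do rewrite mulrSr.
by move=> z; exact: (@continuousD R R^o Z _ f z (IHn z) (cf z)).
Qed.

Lemma open_cozero_gt0 e : continuous e -> open [set z | 0 < e z].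
Proof. by move=> /continuousP/(_ [set r | 0 < r]); apply; exact: open_gt. Qed.

End pointwise_continuity.

Section disjoint_families.
Context {R : realType} {Z : topologicalType}.
Implicit Types (d e : Z -> R) (E P : set (Z -> R)).

(* [Cpos e]: e is a positive element of the vector lattice C(Z); for such
   functions [disjoint_fun] is lattice disjointness, min e e' = 0. *)
Definition Cpos e := [/\ continuous e, forall z, 0 <= e z & exists z, 0 < e z].

Definition disjoint_fun e e' := forall z, e z = 0 \/ e' z = 0.

Definition pairwise_disjoint E :=
  forall e e', E e -> E e' -> e <> e' -> disjoint_fun e e'.

Lemma Cpos_disjoint_neq e e' : Cpos e -> disjoint_fun e e' -> e <> e'.
Proof.
move=> [_ _ [z ez]] dis ee'; rewrite -ee' in dis.
by case: (dis z) => e0; move: ez; rewrite e0 ltxx.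
Qed.

Lemma exists_maximal_disjoint P : P `<=` Cpos ->
  exists D, [/\ D `<=` P, pairwise_disjoint D &
    forall d, P d -> exists2 d', D d' & exists z, 0 < d z /\ 0 < d' z].
Proof.
move=> PC.
have [D [[DP Ddis] Dmax]] : exists D, (D `<=` P /\ pairwise_disjoint D) /\
    forall D', D `<` D' -> ~ (D' `<=` P /\ pairwise_disjoint D').
  apply: Zorn_bigcup => F FP Ftot; split.
    by move=> e [D FD De]; exact: (FP D FD).1.
  move=> e e' [D1 FD1 D1e] [D2 FD2 D2e'].
  case: (Ftot D1 D2 FD1 FD2) => D12.
    by apply: (FP D2 FD2).2 => //; exact: D12.
  by apply: (FP D1 FD1).2 => //; exact: D12.
exists D; split=> // d Pd; apply: contrapT => dfree.
have [_ dge0 [z dz]] := PC d Pd.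
have Dd : ~ D d by move=> Dd; apply: dfree; exists d => //; exists z.
apply: (Dmax (D `|` [set d])).
  by split=> [x Dx|DdD]; [left | apply: Dd; exact: (DdD d (or_intror erefl))].
split=> [e [De|->]|]; [exact: DP | exact: Pd|].
have away e : D e -> disjoint_fun e d.
  move=> De x; have [_ ege0 _] := PC e (DP e De).
  have [dx|] := ltP 0 (d x); last by right; apply/eqP; rewrite eq_le dge0 andbT.
  left; apply/eqP; rewrite eq_le ege0 andbT leNgt; apply/negP => ex.
  by apply: dfree; exists e => //; exists x.
move=> e e' [De|->] [De'|->] ne x; first exact: Ddis.
- exact: away.
- by case: (away e' De' x); [right | left].
- by case: ne.
Qed.

End disjoint_families.

Section truncations.
Context {R : realType} {Z : topologicalType}.
Implicit Types (a b d e : Z -> R) (E P : set (Z -> R)).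

Definition trunc a n : Z -> R := fun z => Num.min (a z *+ n.+1) 1.

Definition truncations P := [set b | exists a n, P a /\ b = trunc a n].

Lemma trunc_le1 a n z : trunc a n z <= 1.
Proof. by rewrite ge_min lexx orbT. Qed.

Lemma trunc_gt0 a n z : 0 < a z -> 0 < trunc a n z.
Proof. by move=> az; rewrite lt_min ltr01 andbT pmulrn_lgt0. Qed.

Lemma trunc_eq0 a n z : a z = 0 -> trunc a n z = 0.
Proof. by move=> a0; rewrite /trunc a0 mul0rn min_l ?ler01. Qed.

Lemma continuous_trunc a n : continuous a -> continuous (trunc a n).
Proof.
move=> ca; apply: continuous_min_fun; last exact: continuous_cst_fun.
exact: continuousMn_fun.
Qed.

Lemma trunc_eq1 a z : 0 < a z -> exists n, trunc a n z = 1.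
Proof.
move=> az; have [k] := ltr_add_invr az.
rewrite add0r -div1r ltr_pdivrMr // mulr_natr => /ltW k1.
by exists k; rewrite /trunc min_r.
Qed.

Lemma trunc_inj E a b n m : E `<=` Cpos -> pairwise_disjoint E ->
  E a -> E b -> trunc a n = trunc b m -> a = b.
Proof.
move=> EC Edis Ea Eb ab; apply: contrapT => ne.
have [_ _ [z az]] := EC a Ea.
have := trunc_gt0 n az; rewrite ab.
case: (Edis a b Ea Eb ne z) => [a0|/trunc_eq0->]; last by rewrite ltxx.
by move: az; rewrite a0 ltxx.
Qed.

Lemma countable_trunc_in E (B : set (Z -> R)) :
  E `<=` Cpos -> pairwise_disjoint E -> countable B ->
  countable [set e | E e /\ exists n, B (trunc e n)].
Proof.
move=> EC Edis cB; set EB := [set e | _].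
have /choice[m Bm] e : exists n, EB e -> B (trunc e n).
  by have [[_ [n Bn]]|] := pselect (EB e); [exists n | exists 0%N].
apply: (inj_countable (f := fun e => trunc e (m e))) cB.
  by move=> e e' /set_mem[Ee _] /set_mem[Ee' _]; exact: trunc_inj EC Edis Ee Ee'.
by move=> _ [e EBe <-]; exact: Bm.
Qed.

Lemma is_sup_truncations P :
  (forall a, P a -> continuous a /\ forall z, 0 <= a z) ->
  (forall d, continuous d -> (forall z, 0 <= d z) ->
     (forall a z, P a -> 0 < a z -> d z = 0) -> P d) ->
  is_sup_C (truncations P) (fun _ => 1).
Proof.
move=> PC Psat; split; first exact: continuous_cst_fun.
split=> [_ [a [n [_ ->]]] z|u cu ub]; first exact: trunc_le1.
have ge1 a z : P a -> 0 < a z -> 1 <= u z.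
  move=> Pa az; have [n an1] := trunc_eq1 az.
  by rewrite -an1; apply: ub; exists a, n.
move=> z; rewrite leNgt; apply/negP => uz.
pose d z := Num.max (1 - u z) 0.
have Pd : P d.
  apply: Psat => [|x|a x Pa ax].
  - apply: continuous_max_fun; last exact: continuous_cst_fun.
    by apply: continuousB_fun => //; exact: continuous_cst_fun.
  - by rewrite le_max lexx orbT.
  - by rewrite /d max_r // subr_le0; exact: ge1 ax.
have := ge1 d z Pd; rewrite /d lt_max subr_gt0 uz => /(_ isT).
by rewrite leNgt uz.
Qed.

End truncations.

Section approximating_sup.
Context {R : realType} {Z : topologicalType}.
Implicit Types (d f g u s : Z -> R) (A : set (Z -> R)).

Lemma is_sup_C_approx A s g z0 : is_sup_C A s -> continuous g -> 0 < g z0 ->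
  exists f z, A f /\ s z - f z < g z.
Proof.
move=> [Cs [_ supA]] cg gz0; apply: contrapT => noA.
have ub f : A f -> forall z, f z <= s z - g z.
  move=> Af z; rewrite lerBrDr addrC -lerBrDr leNgt; apply/negP => fz.
  by apply: noA; exists f, z.
by have := supA _ (continuousB_fun Cs cg) ub z0; lra.
Qed.

Lemma exists_Cpos_in_sup_gap A s u (eps : R) z0 :
  A `<=` Cfun -> is_sup_C A s -> continuous u -> 0 < eps -> u z0 + eps < s z0 ->
  exists d f, [/\ Cpos d, A f &
    forall z, 0 < d z -> s z - f z <= eps /\ u z + eps < s z].
Proof.
move=> AC supAs cu eps0 gap; have [Cs [ubA _]] := supAs.
pose g z := Num.min (Num.max (s z - u z - eps) 0) eps.
have cg : continuous g.
  apply: continuous_min_fun; last exact: continuous_cst_fun.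
  apply: continuous_max_fun; last exact: continuous_cst_fun.
  apply: continuousB_fun; last exact: continuous_cst_fun.
  exact: continuousB_fun.
have g_gap z : 0 < g z -> u z + eps < s z.
  by rewrite /g lt_min lt_max ltxx orbF => /andP[+ _]; lra.
have [f [z1 [Af fz1]]] : exists f z, A f /\ s z - f z < g z.
  apply: (is_sup_C_approx (z0 := z0) supAs cg).
  by rewrite /g lt_min eps0 andbT lt_max; apply/orP; left; lra.
exists (fun z => Num.max (g z - (s z - f z)) 0), f; split=> //.
  split=> [|z|]; last by exists z1; rewrite lt_max subr_gt0 fz1.
  - apply: continuous_max_fun; last exact: continuous_cst_fun.
    by apply: continuousB_fun => //; apply: continuousB_fun => //; exact: AC.
  - by rewrite le_max lexx orbT.
move=> z; rewrite lt_max ltxx orbF subr_gt0 => close.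
have g_le : g z <= eps by rewrite ge_min lexx orbT.
split; first lra.
by apply: g_gap; have := ubA f Af z; lra.
Qed.

End approximating_sup.

Definition ccc (R : realType) (Z : topologicalType) :=
  forall E : set (Z -> R), E `<=` Cpos -> pairwise_disjoint E -> countable E.

Lemma countable_sup_property_ccc (R : realType) (Z : topologicalType) :
  countable_sup_property R Z -> ccc R Z.
Proof.
move=> cspZ E EC Edis; apply: contrapT => nE.
pose P (a : Z -> R) := [/\ continuous a, forall z, 0 <= a z &
  forall e, E e -> a <> e -> disjoint_fun a e].
have PE e : E e -> P e.
  by move=> Ee; have [ce ege0 _] := EC e Ee; split=> // e'; exact: Edis.
have supA : is_sup_C (truncations P) (fun _ => 1).
  apply: is_sup_truncations => [a [] //|d cd dge0 dP]; split=> // e Ee _ z.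
  have [ez|] := ltP 0 (e z); first by left; exact: dP (PE e Ee) ez.
  by have [_ ege0 _] := EC e Ee; right; apply/eqP; rewrite eq_le ege0 andbT.
have AC : truncations P `<=` Cfun.
  by move=> _ [a [n [[ca _ _] ->]]]; exact: continuous_trunc.
have A0 : truncations P !=set0.
  exists (trunc (fun _ => 0) 0), (fun _ => 0), 0; split=> //.
  by split=> [|//|e _ _ z]; [exact: continuous_cst_fun | left].
have [B [BA cB supB]] := cspZ _ _ AC A0 supA.
have [e0 [Ee0 nEBe0]] : exists e, E e /\ ~ exists n, B (trunc e n).
  apply: contrapT => allB; apply: nE.
  apply: (sub_countable _ (countable_trunc_in EC Edis cB)).
  apply: subset_card_le => e Ee; split=> //.
  by apply: contrapT => nEB; apply: allB; exists e.
have [ce0 _ [z e0z]] := EC e0 Ee0.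
pose u z := 1 - Num.min (e0 z) 1.
have ubB b : B b -> forall x, b x <= u x.
  move=> Bb x; have [a [n [[_ _ adis] bE]]] := BA b Bb; rewrite bE.
  have ae0 : a <> e0.
    by move=> ae; apply: nEBe0; exists n; rewrite -ae -bE.
  case: (adis e0 Ee0 ae0 x) => [/trunc_eq0->|e0x]; rewrite /u.
    by rewrite subr_ge0 ge_min lexx orbT.
  by rewrite e0x min_l ?ler01 // subr0; exact: trunc_le1.
have cu : continuous u.
  apply: continuousB_fun; first exact: continuous_cst_fun.
  by apply: continuous_min_fun => //; exact: continuous_cst_fun.
have [_ [_ least]] := supB.
have := least u cu ubB z; rewrite /u.
have : 0 < Num.min (e0 z) 1 by rewrite lt_min e0z ltr01.
lra.
Qed.

Lemma calibre_aleph1_common_point (Y : topologicalType) I (E : set I)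
    (V : I -> set Y) :
  calibre_aleph1 Y -> ~ countable E ->
  (forall i, E i -> open (V i) /\ V i !=set0) ->
  exists E' y, [/\ E' `<=` E, ~ countable E' & forall i, E' i -> V i y].
Proof.
move=> calY nE EV; have [cVE|nVE] := pselect (countable (V @` E)).
  have [i Ei nfib] : exists2 i, E i & ~ countable [set j | E j /\ V j = V i].
    apply: contrapT => allc; apply: nE.
    have cover : E `<=` \bigcup_(W in V @` E) [set j | E j /\ V j = W].
      by move=> i Ei; exists (V i) => //; exists i.
    apply: (sub_countable (subset_card_le cover)).
    apply: bigcup_countable => // _ [i Ei <-].
    by apply: contrapT => ni; apply: allc; exists i.
  have [y Vy] := (EV i Ei).2.
  by exists [set j | E j /\ V j = V i], y; split=> [j []|//|j [_ ->]].
have VEopen U : (V @` E) U -> open U /\ U !=set0 by move=> [i Ei <-]; exact: EV.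
have [G [GVE nG [y Gy]]] := calY _ nVE VEopen.
exists [set i | E i /\ G (V i)], y; split=> [i []//|cE'|i [_ /Gy]//].
apply: nG; apply: (sub_countable _ (sub_countable (card_image_le V _) cE')).
apply: subset_card_le => W GW; have [i Ei Vi] := GVE W GW.
by exists i; first by rewrite /= Vi.
Qed.

Lemma continuous_slice (R : realType) (X Y : topologicalType)
    (e : X * Y -> R) (y : Y) :
  continuous e -> continuous (fun x => e (x, y)).
Proof.
move=> ce x; apply: (@continuous_comp _ _ _ (fun x => (x, y)) e); last exact: ce.
by apply: cvg_pair; [exact: cvg_id | exact: cvg_cst].
Qed.

Lemma ccc_prod (R : realType) (X Y : topologicalType) :
  ccc R X -> calibre_aleph1 Y -> ccc R (X * Y)%type.
Proof.
move=> cccX calY E EC Edis; apply: contrapT => nE.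
have cozero_snd e : E e ->
    open (snd @` [set p | 0 < e p]) /\ snd @` [set p | 0 < e p] !=set0.
  move=> Ee; have [ce _ [p ep]] := EC e Ee.
  by split; [exact/snd_open/open_cozero_gt0 | exists p.2, p].
have [E' [y [E'E nE' E'y]]] := calibre_aleph1_common_point calY nE cozero_snd.
pose slice (e : X * Y -> R) x := e (x, y).
have slice_pos e : E' e -> Cpos (slice e).
  move=> E'e; have [ce ege0 _] := EC e (E'E e E'e).
  split=> [|x|]; [exact: continuous_slice | exact: ege0 |].
  have [[x y'] exy /= yy'] := E'y e E'e.
  by exists x; rewrite /slice -yy'.
have slice_dis e e' :
    E' e -> E' e' -> e <> e' -> disjoint_fun (slice e) (slice e').
  by move=> E'e E'e' ne x; apply: Edis => //; exact: E'E.
apply: nE'; apply: (inj_countable (B := slice @` E') (f := slice)) => //.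
  move=> e e' /set_mem E'e /set_mem E'e' same; apply: contrapT => ne.
  exact: Cpos_disjoint_neq (slice_pos e E'e) (slice_dis e e' E'e E'e' ne) same.
apply: cccX => [_ [e E'e <-]|_ _ [e E'e <-] [e' E'e' <-] ne].
  exact: slice_pos.
by apply: slice_dis => // ee'; apply: ne; rewrite ee'.
Qed.

Lemma ccc_countable_sup_property (R : realType) (Z : topologicalType) :
  ccc R Z -> countable_sup_property R Z.
Proof.
move=> cccZ A s AC [f0 Af0] supAs; have [Cs [ubA _]] := supAs.
pose eps n : R := n.+1%:R^-1.
have eps_gt0 n : 0 < eps n by rewrite invr_gt0 ltr0Sn.
pose approx n (d f : Z -> R) := A f /\ forall z, 0 < d z -> s z - f z <= eps n.
pose good n (d : Z -> R) := Cpos d /\ exists f, approx n d f.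
have /choice[pick pickP] n : exists p, forall d, good n d -> approx n d (p d).
  have /choice[p pP] d : exists f, good n d -> approx n d f.
    by have [[_ [f af]]|] := pselect (good n d); [exists f | exists f0].
  by exists p.
have /choice[D HD] n : exists D, [/\ D `<=` good n, pairwise_disjoint D &
    forall d, good n d -> exists2 d', D d' & exists z, 0 < d z /\ 0 < d' z].
  by apply: exists_maximal_disjoint => d [].
pose B := \bigcup_(n in setT) (pick n @` D n).
have BA : B `<=` A.
  move=> _ [n _ [d Dd <-]]; have [Dgood _ _] := HD n.
  exact: (pickP n d (Dgood d Dd)).1.
exists B; split=> //.
  apply: bigcup_countable => // n _; have [Dgood Ddis _] := HD n.
  apply: sub_countable (card_image_le _ _) _; apply: cccZ Ddis.
  by move=> d /Dgood[].
split; first exact: Cs.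
split=> [f /BA|u cu ubB z0]; first exact: ubA.
rewrite leNgt; apply/negP => /ltr_add_invr[n gap].
have [d' [f [Cd' Af close]]] :=
  exists_Cpos_in_sup_gap AC supAs cu (eps_gt0 n) gap.
have [Dgood _ Dmax] := HD n.
have good_d' : good n d' by split=> //; exists f; split=> // z /close[].
have [d Dd [z [d'z dz]]] := Dmax d' good_d'.
have [_ pick_close] := pickP n d (Dgood d Dd).
have Bpick : B (pick n d) by exists n => //; exists d.
have := ubB _ Bpick z; have := pick_close z dz; have [_] := close z d'z; lra.
Qed.

Theorem theorem6p2 (R : realType) (X Y : topologicalType) :
  countable_sup_property R X -> calibre_aleph1 Y ->
  countable_sup_property R (X * Y)%type.
Proof.
move=> cspX calY; apply: ccc_countable_sup_property.
exact: ccc_prod (countable_sup_property_ccc cspX) calY.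
Qed.
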